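(* Let $(c_t)_{t\ge0}$ be a non-decreasing sequence of positive reals and let $x^\star\in\mathbb R^d$ be a minimizer of $f$. For every $t\ge0$ let $s(t)$ be the largest multiple of $\tau$ with $s(t)\le t$. Then the FedDecSPS iterates satisfy (pathwise) $$R_t:=\frac1n\sum_{i=1}^n\|\bar x_t-x_t^i\|^2\le\frac\tau n\sum_{i=1}^n\sum_{j=s(t)}^{t-1}\frac{\gamma_j^i}{c_j}\big[F_i(x_j^i,\xi_j^i)-F_i(x^\star,\xi_j^i)\big]+\frac{c_0\gamma_b\tau}{n}\sum_{i=1}^n\sum_{j=s(t)}^{t-1}\frac1{c_j^2}\big[F_i(x^\star,\xi_j^i)-\ell_i^\star\big].$$
   Context: For each $i\in[n]$, $\mathcal D_i$ is a probability distribution on $\Omega_i$, $F_i:\mathbb R^d\times\Omega_i\to\mathbb R$ with $F_i(\cdot,\xi)$ differentiable for $\xi\in\operatorname{supp}(\mathcal D_i)$; $f_i(x):=\mathbb E_{\xi\sim\mathcal D_i}F_i(x,\xi)$, $f:=\frac1n\sum_if_i$. $F_i^\star:=\inf_{\xi\in\operatorname{supp}(\mathcal D_i),x}F_i(x,\xi)$ and $\ell_i^\star\le F_i^\star$ are given reals. FedDecSPS with parameter $\gamma_b>0$, communication period integer $\tau\ge1$, and non-decreasing positive sequence $(c_t)_{t\ge0}$: set $c_{-1}:=c_0$, $\gamma_{-1}^i:=\gamma_b$, $x_0^i=x_0$. At each $t\ge0$, client $i$ draws $\xi_t^i\sim\mathcal D_i$, sets $g_t^i:=\nabla F_i(x_t^i,\xi_t^i)$,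 $\gamma_t^i:=\frac1{c_t}\min\{\frac{F_i(x_t^i,\xi_t^i)-\ell_i^\star}{\|g_t^i\|^2},c_{t-1}\gamma_{t-1}^i\}$ (first term $+\infty$ if $g_t^i=0$); if $t+1$ is a multiple of $\tau$, $x_{t+1}^i:=\frac1n\sum_j(x_t^j-\gamma_t^jg_t^j)$ for all $i$, else $x_{t+1}^i:=x_t^i-\gamma_t^ig_t^i$. $\bar x_t:=\frac1n\sum_ix_t^i$. *)

From HB Require Import structures.
From mathcomp Require Import all_boot all_order all_algebra.
From mathcomp Require Import all_classical all_reals all_analysis.
Set Implicit Arguments. Unset Strict Implicit. Unset Printing Implicit Defensive.
Import Order.TTheory GRing.Theory Num.Theory.
Import numFieldNormedType.Exports.
Local Open Scope classical_set_scope.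
Local Open Scope ring_scope.

Section FedDecSPS.
Variables (R : realType) (d n : nat).
Local Notation vec := 'rV[R]_d.

Definition sqnorm (v : vec) : R := \sum_(k < d) (v 0 k) ^+ 2.

Definition grad (f : vec -> R) (x : vec) : vec :=
  \row_(k < d) ('D_(delta_mx 0 k) f x).

Variables (Omega : 'I_n -> Type) (F : forall i : 'I_n, vec -> Omega i -> R)
  (ell : 'I_n -> R) (gamma_b : R) (tau : nat) (c : nat -> R) (x0 : vec)
  (xi : nat -> forall i : 'I_n, Omega i).

(* c_{t-1}, with the convention c_{-1} = c_0 *)
Definition cprev (t : nat) : R := if t is t'.+1 then c t' else c 0.

Definition sgrad (t : nat) (i : 'I_n) (x : vec) : vec :=
  grad (fun y => F y (xi t i)) x.

Definition stepsize (t : nat) (i : 'I_n) (x : vec) (gp : R) : R :=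
  let g := sgrad t i x in
  (c t)^-1 * (if g == 0 then cprev t * gp
              else Num.min ((F x (xi t i) - ell i) / sqnorm g) (cprev t * gp)).

(* state at time t : (x_t^i)_i together with (gamma_{t-1}^i)_i *)
Fixpoint state (t : nat) : ('I_n -> vec) * ('I_n -> R) :=
  match t with
  | 0 => (fun _ => x0, fun _ => gamma_b)
  | t'.+1 =>
      let xs := (state t').1 in
      let gs := (state t').2 in
      let gam := fun i => stepsize t' i (xs i) (gs i) in
      let y := fun i => xs i - gam i *: sgrad t' i (xs i) in
      ((if (tau %| t'.+1)%N then fun _ => (n%:R)^-1 *: \sum_(j < n) y j
        else y), gam)
  end.

Definition iter_x (t : nat) (i : 'I_n) : vec := (state t).1 i.
Definition iter_gamma (t : nat) (i : 'I_n) : R := (state t.+1).2 i.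
Definition xbar (t : nat) : vec := (n%:R)^-1 *: \sum_(i < n) iter_x t i.

End FedDecSPS.

Definition last_comm (tau t : nat) : nat := (t %/ tau * tau)%N.

Definition Fstar (R : realType) (d : nat) (Om : Type) (S : set Om)
  (Fi : 'rV[R]_d -> Om -> R) : \bar R :=
  ereal_inf [set (Fi x z)%:E | x in [set: 'rV[R]_d] & z in S].

Definition fexp (R : realType) (d : nat) (dm : measure_display)
  (Om : measurableType dm) (P : probability Om R)
  (Fi : 'rV[R]_d -> Om -> R) (x : 'rV[R]_d) : \bar R :=
  (\int[P]_z (Fi x z)%:E)%E.

Definition ftot (R : realType) (d n : nat) (dm : measure_display)
  (Om : 'I_n -> measurableType dm) (P : forall i, probability (Om i) R)
  (F : forall i : 'I_n, 'rV[R]_d -> Om i -> R) (x : 'rV[R]_d) : \bar R :=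
  ((n%:R)^-1)%:E * (\sum_(i < n) fexp (P i) (F i) x)%E.

From HB Require Import structures.
From mathcomp Require Import all_boot all_order all_algebra.
From mathcomp Require Import all_classical all_reals all_analysis.
From mathcomp Require Import ring lra zify.
Import Order.TTheory GRing.Theory Num.Theory.
Import numFieldNormedType.Exports.
Local Open Scope classical_set_scope.
Local Open Scope ring_scope.

(* Let s = s(t).  Since s is a communication round all clients share x_s,
   and between s and t no averaging happens, so
   x_t^i = x_s - A_i  with the local drift  A_i = sum_{s<=j<t} gamma_j^i g_j^i.
   (1) The mean minimises the sum of squared distances, hence
       sum_i ||xbar_t - x_t^i||^2 <= sum_i ||x_s - x_t^i||^2 = sum_i ||A_i||^2.
   (2) Cauchy-Schwarz over the t - s <= tau summands of A_i gives
       ||A_i||^2 <= tau * sum_j (gamma_j^i)^2 ||g_j^i||^2.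
   (3) The step-size rule gives, for each j,  gamma ||g||^2 <= (F(x) - l)/c_j
       and  gamma <= c_0 gamma_b / c_j, whence the one-step estimate
       gamma^2 ||g||^2 <= gamma/c_j (F(x) - F(xstar)) + c_0 gamma_b/c_j^2 (F(xstar) - l).  Only F_i(., xi) >= l_i (a consequence of l_i <= F_i^star) is used;
   the bound holds pathwise, for any point xstar. *)

Section ScalarInequalities.
Variable R : realFieldType.

Lemma sum_sqr_dev_mean_le (n : nat) (w : 'I_n -> R) (z : R) : (0 < n)%N ->
  \sum_(i < n) ((n%:R)^-1 * \sum_(k < n) w k - w i) ^+ 2
  <= \sum_(i < n) (z - w i) ^+ 2.
Proof.
move=> n_gt0; set S := \sum_(k < n) w k; set m := (n%:R)^-1 * S.
have nR : (n%:R : R) != 0 by rewrite pnatr_eq0 -lt0n.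
have Sm : S = n%:R * m by rewrite /m mulrA mulfV // mul1r.
rewrite -subr_ge0 -sumrB.
have -> : \sum_(i < n) ((z - w i) ^+ 2 - (m - w i) ^+ 2)
   = \sum_(i < n) ((z - m) * (z + m) - (z - m) * 2 * w i).
  by apply: eq_bigr => i _; ring.
rewrite sumrB sumr_const card_ord -mulr_sumr -/S Sm.
have -> : (z - m) * (z + m) *+ n - (z - m) * 2 * (n%:R * m)
          = n%:R * (z - m) ^+ 2 by rewrite -mulr_natr; ring.
by rewrite mulr_ge0 ?ler0n ?sqr_ge0.
Qed.

Lemma sqr_sum_le {I : Type} (r : seq I) (a : I -> R) :
  (\sum_(j <- r) a j) ^+ 2 <= (size r)%:R * \sum_(j <- r) a j ^+ 2.
Proof.
elim: r => [|i r IH]; first by rewrite !big_nil expr0n mul0r.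
rewrite !big_cons /= -natr1.
set S := \sum_(j <- r) a j; set Q := \sum_(j <- r) a j ^+ 2.
have cross : 2 * a i * S <= (size r)%:R * a i ^+ 2 + Q.
  have -> : (size r)%:R * a i ^+ 2 = \sum_(j <- r) a i ^+ 2.
    by rewrite big_const_seq count_predT -Monoid.iteropE /= mulr_natl.
  rewrite /S /Q mulr_sumr -big_split /=; apply: ler_sum => j _.
  have := sqr_ge0 (a i - a j); lra.
move: IH; rewrite -/S -/Q => IH; lra.
Qed.

Lemma step_energy_split (g q c K Fx Fs l : R) :
  0 <= g -> 0 < c -> c * g <= K -> g * q <= (Fx - l) / c -> l <= Fs ->
  g ^+ 2 * q <= g / c * (Fx - Fs) + K * (c ^+ 2)^-1 * (Fs - l).
Proof.
move=> g_ge0 c_gt0 cgK gq Fs_l; set u := c^-1 in gq *.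
have u_gt0 : 0 < u by rewrite invr_gt0.
have g_le : g <= K * u.
  have -> : g = (c * g) * u by rewrite mulrAC mulfV ?gt_eqF // mul1r.
  by rewrite ler_wpM2r // ltW.
have gq2 : g ^+ 2 * q <= g * ((Fx - l) * u) by rewrite expr2 -mulrA ler_wpM2l.
have noise : 0 <= (K * u - g) * (u * (Fs - l)).
  by rewrite mulr_ge0 ?subr_ge0 // mulr_ge0 ?subr_ge0 // ltW.
rewrite -exprVn -/u; nra.
Qed.

End ScalarInequalities.

Section SquaredNorm.
Context {R : realType} {d : nat}.
Local Notation vec := 'rV[R]_d.

Lemma sqnorm_ge0 (v : vec) : 0 <= sqnorm v.
Proof. by apply: sumr_ge0 => k _; apply: sqr_ge0. Qed.

Lemma sqnorm0 : sqnorm (0 : vec) = 0.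
Proof. by apply: big1 => k _; rewrite mxE expr0n. Qed.

Lemma sqnorm_gt0 (v : vec) : v != 0 -> 0 < sqnorm v.
Proof.
move=> v_neq0; rewrite lt_def sqnorm_ge0 andbT; apply/negP => /eqP v0.
move/eqP: v_neq0; apply; apply/rowP => k; rewrite mxE.
have : (v 0 k) ^+ 2 == 0.
  rewrite eq_le sqr_ge0 andbT -v0 /sqnorm (bigD1 k) //= lerDl.
  by apply: sumr_ge0 => l _; apply: sqr_ge0.
by rewrite sqrf_eq0 => /eqP.
Qed.

Lemma sqnormZ (a : R) (v : vec) : sqnorm (a *: v) = a ^+ 2 * sqnorm v.
Proof. by rewrite /sqnorm mulr_sumr; apply: eq_bigr => k _; rewrite mxE exprMn. Qed.

Lemma sqnorm_dev_mean_le (n : nat) (w : 'I_n -> vec) (z : vec) : (0 < n)%N ->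
  \sum_(i < n) sqnorm ((n%:R)^-1 *: \sum_(k < n) w k - w i)
  <= \sum_(i < n) sqnorm (z - w i).
Proof.
move=> n_gt0; rewrite /sqnorm exchange_big [leRHS]exchange_big /=.
apply: ler_sum => k _.
under eq_bigr => i _ do rewrite !mxE summxE.
under [leRHS]eq_bigr => i _ do rewrite !mxE.
exact: sum_sqr_dev_mean_le.
Qed.

Lemma sqnorm_sum_le {I : Type} (r : seq I) (v : I -> vec) :
  sqnorm (\sum_(j <- r) v j) <= (size r)%:R * \sum_(j <- r) sqnorm (v j).
Proof.
rewrite /sqnorm exchange_big mulr_sumr; apply: ler_sum => k _.
by rewrite summxE; apply: sqr_sum_le.
Qed.

End SquaredNorm.

Section FedDecSPSIterates.
Context {R : realType} {d n : nat} {Omega : 'I_n -> Type}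
  {F : forall i : 'I_n, 'rV[R]_d -> Omega i -> R}
  {ell : 'I_n -> R} {gamma_b : R} {tau : nat} {c : nat -> R} {x0 : 'rV[R]_d}
  {xi : nat -> forall i : 'I_n, Omega i}.
Hypothesis c_gt0 : forall t, 0 < c t.
Hypothesis ell_le_F : forall t i x, ell i <= F i x (xi t i).
Hypothesis gamma_b_gt0 : 0 < gamma_b.

Local Notation X := (iter_x F ell gamma_b tau c x0 xi).
Local Notation gam := (iter_gamma F ell gamma_b tau c x0 xi).
Local Notation gprev t i := ((state F ell gamma_b tau c x0 xi t).2 i).
Local Notation g t i := (sgrad F xi t i (X t i)).

Lemma stepsize_props t i x gp : 0 <= gp ->
  let s := stepsize F ell c xi t i x gp in
  [/\ 0 <= s, c t * s <= cprev c t * gp &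
      s * sqnorm (sgrad F xi t i x) <= (F i x (xi t i) - ell i) / c t].
Proof.
move=> gp_ge0 /=; rewrite /stepsize.
have cp_ge0 : 0 <= cprev c t * gp.
  by rewrite mulr_ge0 //; case: t => [|t] /=; apply: ltW.
have ct_gt0 := c_gt0 t; have ct_neq0 : c t != 0 by rewrite gt_eqF.
have cinv_ge0 : 0 <= (c t)^-1 by rewrite invr_ge0 ltW.
have gap_ge0 : 0 <= F i x (xi t i) - ell i by rewrite subr_ge0.
case: eqP => [->|/eqP g_neq0].
  by rewrite sqnorm0 mulr0 mulVKf //; split => //; apply: mulr_ge0.
have sq_gt0 := sqnorm_gt0 _ g_neq0.
set q := (F i x (xi t i) - ell i) / sqnorm (sgrad F xi t i x).
have q_ge0 : 0 <= q by rewrite divr_ge0 // ltW.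
split.
- by rewrite mulr_ge0 // le_min q_ge0 cp_ge0.
- by rewrite mulVKf // ge_min lexx orbT.
- rewrite -mulrA mulrC ler_wpM2r // mulrC.
  apply: le_trans (_ : sqnorm (sgrad F xi t i x) * q <= _).
    by rewrite ler_wpM2l ?ge_min ?lexx // ltW.
  by rewrite /q mulrCA mulfV ?mulr1 // gt_eqF.
Qed.

Lemma prev_step_bounds t i :
  0 <= gprev t i /\ cprev c t * gprev t i <= c 0 * gamma_b.
Proof.
elim: t => [|t [gp_ge0 gp_le]] /=; first by split; [apply: ltW|].
have [s_ge0 s_le _] := stepsize_props t i (X t i) _ gp_ge0.
by split => //; apply: le_trans gp_le.
Qed.

Lemma step_energy_le (xstar : 'rV[R]_d) t i :
  gam t i ^+ 2 * sqnorm (g t i)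
  <= gam t i / c t * (F i (X t i) (xi t i) - F i xstar (xi t i))
     + c 0 * gamma_b * ((c t ^+ 2)^-1 * (F i xstar (xi t i) - ell i)).
Proof.
have [gp_ge0 gp_le] := prev_step_bounds t i.
have [s_ge0 s_le s_cap] := stepsize_props t i (X t i) _ gp_ge0.
by rewrite mulrA; apply: step_energy_split => //; apply: le_trans gp_le.
Qed.

Lemma iter_x_S t i : X t.+1 i =
  if (tau %| t.+1)%N then (n%:R)^-1 *: \sum_(j < n) (X t j - gam t j *: g t j)
  else X t i - gam t i *: g t i.
Proof. by rewrite /iter_x /iter_gamma /=; case: ifP. Qed.

Lemma iter_x_synced s i i' : (tau %| s)%N -> X s i = X s i'.
Proof. by case: s => [|s] //= tau_s; rewrite !iter_x_S tau_s. Qed.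

Lemma iter_x_local s k i : (tau %| s)%N -> (k < tau)%N ->
  X (s + k) i = X s i - \sum_(s <= j < s + k) gam j i *: g j i.
Proof.
move=> tau_s; elim: k => [|k IH] k_lt; first by rewrite addn0 big_geq // subr0.
rewrite addnS iter_x_S ifN; last first.
  rewrite -addnS dvdn_addr //; apply/negP => /(dvdn_leq (ltn0Sn k)); lia.
by rewrite {1}(IH (ltnW k_lt)) big_nat_recr ?leq_addr //= opprD addrA.
Qed.

Definition local_drift (t : nat) (i : 'I_n) : 'rV[R]_d :=
  \sum_(last_comm tau t <= j < t) gam j i *: g j i.

Hypothesis tau_gt0 : (0 < tau)%N.

Lemma last_comm_props t :
  (tau %| last_comm tau t)%N /\ (last_comm tau t <= t < last_comm tau t + tau)%N.
Proof.
rewrite /last_comm dvdn_mull //; split => //.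
by have := ltn_pmod t tau_gt0; have := divn_eq t tau; lia.
Qed.

Lemma iter_x_since_comm t i : X t i = X (last_comm tau t) i - local_drift t i.
Proof.
have [tau_s /andP[s_le t_lt]] := last_comm_props t.
rewrite {1}(_ : t = last_comm tau t + (t - last_comm tau t))%N; last by lia.
by rewrite iter_x_local ?subnKC //; lia.
Qed.

Hypothesis n_gt0 : (0 < n)%N.

Lemma consensus_le_drift t :
  \sum_(i < n) sqnorm (xbar F ell gamma_b tau c x0 xi t - X t i)
  <= \sum_(i < n) sqnorm (local_drift t i).
Proof.
pose i0 : 'I_n := Ordinal n_gt0.
have [tau_s _] := last_comm_props t.
have drift_eq i : local_drift t i = X (last_comm tau t) i0 - X t i.
  by rewrite (iter_x_since_comm t i) (iter_x_synced _ i i0 tau_s) subKr.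
under [leRHS]eq_bigr => i _ do rewrite drift_eq.
exact: sqnorm_dev_mean_le.
Qed.

Lemma drift_sqnorm_le (xstar : 'rV[R]_d) t i :
  sqnorm (local_drift t i)
  <= tau%:R * \sum_(last_comm tau t <= j < t)
       (gam j i / c j * (F i (X j i) (xi j i) - F i xstar (xi j i))
        + c 0 * gamma_b * ((c j ^+ 2)^-1 * (F i xstar (xi j i) - ell i))).
Proof.
have [_ /andP[s_le t_lt]] := last_comm_props t.
apply: le_trans (sqnorm_sum_le _ _) _.
rewrite size_iota; apply: ler_pM.
- exact: ler0n.
- by apply: sumr_ge0 => j _; apply: sqnorm_ge0.
- by rewrite ler_nat; lia.
apply: ler_sum => j _; rewrite sqnormZ; exact: step_energy_le.
Qed.

Lemma consensus_distance_le (xstar : 'rV[R]_d) t :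
  \sum_(i < n) sqnorm (xbar F ell gamma_b tau c x0 xi t - X t i)
  <= tau%:R * (\sum_(i < n) \sum_(last_comm tau t <= j < t)
                 gam j i / c j * (F i (X j i) (xi j i) - F i xstar (xi j i))
               + c 0 * gamma_b * \sum_(i < n) \sum_(last_comm tau t <= j < t)
                 (c j ^+ 2)^-1 * (F i xstar (xi j i) - ell i)).
Proof.
apply: le_trans (consensus_le_drift t) _.
apply: le_trans (ler_sum _ (fun i _ => drift_sqnorm_le xstar t i)) _.
rewrite -mulr_sumr ler_wpM2l // !mulr_sumr -big_split /=.
by apply: ler_sum => i _; rewrite mulr_sumr -big_split.
Qed.

End FedDecSPSIterates.

Theorem mainTheorem13 (R : realType) (d n : nat) (dm : measure_display)
  (Omega : 'I_n -> measurableType dm)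
  (D : forall i : 'I_n, probability (Omega i) R)
  (supp : forall i : 'I_n, set (Omega i))
  (F : forall i : 'I_n, 'rV[R]_d -> Omega i -> R)
  (ell : 'I_n -> R) (gamma_b : R) (tau : nat) (c : nat -> R)
  (x0 xstar : 'rV[R]_d) (xi : nat -> forall i : 'I_n, Omega i) :
  (0 < n)%N ->
  (* supp i models the support of D_i: a measurable set of full measure *)
  (forall i, measurable (supp i) /\ D i (supp i) = 1%E) ->
  (forall i z, supp i z -> forall x, differentiable (fun y => F i y z) x) ->
  (forall i, ((ell i)%:E <= Fstar (supp i) (F i))%E) ->
  0 < gamma_b -> (0 < tau)%N ->
  (forall t, 0 < c t) -> (forall t, c t <= c t.+1) ->
  (* x* is a minimizer of f *)
  (forall y, (ftot D F xstar <= ftot D F y)%E) ->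
  (* the samples xi_t^i are drawn from D_i, hence lie in its support *)
  (forall t i, supp i (xi t i)) ->
  forall t : nat,
    (n%:R)^-1 * \sum_(i < n)
        sqnorm (xbar F ell gamma_b tau c x0 xi t
                - iter_x F ell gamma_b tau c x0 xi t i)
    <= tau%:R / n%:R * \sum_(i < n) \sum_(last_comm tau t <= j < t)
          iter_gamma F ell gamma_b tau c x0 xi j i / c j
          * (F i (iter_x F ell gamma_b tau c x0 xi j i) (xi j i)
             - F i xstar (xi j i))
     + c 0 * gamma_b * tau%:R / n%:R * \sum_(i < n)
         \sum_(last_comm tau t <= j < t)
          (c j ^+ 2)^-1 * (F i xstar (xi j i) - ell i).
Proof.
move=> n_gt0 _ _ ell_le_Fstar gamma_b_gt0 tau_gt0 c_gt0 _ _ xi_supp t.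
(* samples lie in the support, so l_i <= F_i^star <= F_i(x, xi_t^i) *)
have ell_le_F t' i x : ell i <= F i x (xi t' i).
  rewrite -lee_fin; apply: le_trans (ell_le_Fstar i) _.
  by apply: ereal_inf_lbound; exists x => //; exists (xi t' i).
have bound := consensus_distance_le c_gt0 ell_le_F gamma_b_gt0 tau_gt0 n_gt0
  (x0 := x0) xstar t.
apply: le_trans (ler_wpM2l _ bound) _; first by rewrite invr_ge0 ler0n.
by rewrite le_eqVlt; apply/orP; left; apply/eqP; ring.
Qed.
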